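(* Let $X$ be the vertex set of a dual polar graph of diameter $d$ with distance $\partial$ and base vertex $u_0\in X$. Let $x,y\in X$, $U=x\cap y$, and $X'=\{z\in X: U\subseteq z\}$. For every $z\in X$ with $f_x(z)=f_y(z)=1$ there is a unique $z'\in X'$ such that $f_x(z')=f_y(z')=1$ and $f_{z'}(z)=1$.
   Context: Let $V$ be a finite-dimensional vector space over a finite field with a non-degenerate alternating, Hermitian, or quadratic form of Witt index $d$; $X$ is the set of maximal totally isotropic subspaces (dimension $d$), adjacent iff their intersection has dimension $d-1$, with distance $\partial(x,y)=d-\dim(x\cap y)$. For $z\in X$, $f_z:X\to\mathbb{R}$ is defined by $f_z(w)=1$ if $\partial(u_0,z)+\partial(z,w)=\partial(u_0,w)$ and $f_z(w)=0$ otherwise. *)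

From HB Require Import structures.
From mathcomp Require Import all_boot all_order all_algebra.
Set Implicit Arguments. Unset Strict Implicit. Unset Printing Implicit Defensive.
Import GRing.Theory.
Local Open Scope ring_scope.

(* V = 'rV[F]_n over a finite field F, carrying one of the three kinds of
   forms of a finite classical polar space, given by Gram matrices:
   - AltForm M       : B(u,v) = u M v^T          (alternating)
   - HermForm M s    : B(u,v) = u M s(v)^T       (Hermitian w.r.t. s)
   - QuadForm A      : Q(v)   = v A v^T          (quadratic), with polar form
                       B(u,v) = Q(u+v) - Q(u) - Q(v). *)
Inductive polar_form (F : finFieldType) (n : nat) : Type :=
| AltForm of 'M[F]_n
| HermForm of 'M[F]_n & {rmorphism F -> F}
| QuadForm of 'M[F]_n.

Section PolarDefs.
Variables (F : finFieldType) (n : nat).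

Definition bil (M : 'M[F]_n) (u v : 'rV[F]_n) : F := (u *m M *m v^T) 0 0.
Definition sesq (M : 'M[F]_n) (s : {rmorphism F -> F}) (u v : 'rV[F]_n) : F :=
  (u *m M *m (map_mx s v)^T) 0 0.
Definition quad (A : 'M[F]_n) (v : 'rV[F]_n) : F := bil A v v.
Definition quad_polar (A : 'M[F]_n) (u v : 'rV[F]_n) : F :=
  quad A (u + v) - quad A u - quad A v.

Definition pf_nondegenerate (pf : polar_form F n) : Prop :=
  match pf with
  | AltForm M => M \in unitmx /\ (forall u, bil M u u = 0)
  | HermForm M s =>
      [/\ M \in unitmx, (forall a, s (s a) = a), (exists a, s a != a)
        & (map_mx s M)^T = M]
  | QuadForm A =>
      forall v, quad A v = 0 -> (forall w, quad_polar A v w = 0) -> v = 0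
  end.

Definition totally_isotropic (pf : polar_form F n)
    (W : {vspace 'rV[F]_n}) : Prop :=
  match pf with
  | AltForm M => forall u v, u \in W -> v \in W -> bil M u v = 0
  | HermForm M s => forall u v, u \in W -> v \in W -> sesq M s u v = 0
  | QuadForm A => forall u, u \in W -> quad A u = 0
  end.

Definition witt_index (pf : polar_form F n) (d : nat) : Prop :=
  (exists W, totally_isotropic pf W /\ \dim W = d) /\
  (forall W, totally_isotropic pf W -> (\dim W <= d)%N).

Definition dp_vertex (pf : polar_form F n) (d : nat)
    (x : {vspace 'rV[F]_n}) : Prop :=
  totally_isotropic pf x /\ \dim x = d.

Definition dp_dist (d : nat) (x y : {vspace 'rV[F]_n}) : nat :=
  (d - \dim (x :&: y))%N.

Definition fz (d : nat) (u0 z w : {vspace 'rV[F]_n}) : nat :=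
  if (dp_dist d u0 z + dp_dist d z w == dp_dist d u0 w)%N then 1%N else 0%N.

End PolarDefs.

From HB Require Import structures.
From mathcomp Require Import all_boot all_order all_algebra.
From mathcomp Require Import ring zify.
Set Implicit Arguments. Unset Strict Implicit. Unset Printing Implicit Defensive.
Import GRing.Theory.
Local Open Scope ring_scope.

(* For vertices at the base [u0], f_w(b) = 1 says that [w] lies between [u0]
   and [b]: [u0 :&: b <= w <= (u0 :&: w) + (w :&: b)], the equality case of
   dim(u0 ∩ w) + dim(w ∩ b) <= dim w + dim(u0 ∩ b).  With T = x ∩ y ∩ u0, the
   required vertex is z' = T + (z ∩ T^⊥): it is maximal totally isotropic,
   contains x ∩ y (split a vector of x ∩ y along both decompositions of x and
   y), and x, y lie between u0 and z', which lies between u0 and z.  Any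
   other candidate w contains T and meets u0 inside T, hence
   w <= (u0 ∩ w) + (w ∩ z) <= T + (z ∩ T^⊥), and equal dimensions give
   w = z'. *)

Section Betweenness.
Variables (K : fieldType) (vT : vectType K).
Implicit Types a w b : {vspace vT}.

Definition between a w b := ((a :&: b <= w) && (w <= a :&: w + w :&: b))%VS.

Lemma dimv_between a w b :
  (\dim (a :&: w) + \dim (w :&: b) <= \dim w + \dim (a :&: b)
     ?= iff between a w b)%N.
Proof.
rewrite -dimv_sum_cap /between andbC.
have sub_w : (a :&: w + w :&: b <= w)%VS by rewrite subv_add capvSr capvSl.
have -> : (a :&: w :&: (w :&: b) = a :&: b :&: w)%VS.
  by rewrite capvA -(capvA a w w) capvv -capvA (capvC w) capvA.
apply: leqif_add.
  by rewrite -[(w <= _)%VS]andTb -sub_w -eqEsubv; apply: dimv_leqif_eq.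
by rewrite (sameP capv_idPl eqP); apply: dimv_leqif_eq; apply: capvSl.
Qed.

End Betweenness.

Lemma fz_between (F : finFieldType) (n d : nat) (a w b : {vspace 'rV[F]_n}) :
  \dim a = d -> \dim w = d -> fz d a w b = 1%N <-> between a w b.
Proof.
move=> da dw; have [_] := dimv_between a w b; rewrite dw => <-.
have aw : (\dim (a :&: w) <= d)%N by rewrite -dw dimvS ?capvSr.
have wb : (\dim (w :&: b) <= d)%N by rewrite -dw dimvS ?capvSl.
have ab : (\dim (a :&: b) <= d)%N by rewrite -da dimvS ?capvSl.
rewrite /fz /dp_dist; case: eqP; case: eqP => //; lia.
Qed.

Section Forms.
Variables (F : finFieldType) (n : nat).
Implicit Types (pf : polar_form F n) (u v : 'rV[F]_n).

(* The three kinds are handled through one sesquilinear form [sform]; a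
   quadratic form [A] contributes its polar form, with Gram matrix [A + A^T],
   and the extra condition that vectors be singular. *)
Definition form_mx pf : 'M[F]_n :=
  match pf with AltForm M | HermForm M _ => M | QuadForm A => A + A^T end.
Definition form_aut pf (c : F) : F :=
  match pf with HermForm _ s => s c | _ => c end.
Definition form_twist pf v : 'rV[F]_n :=
  match pf with HermForm _ s => map_mx s v | _ => v end.
Definition sform pf u v : F := (u *m form_mx pf *m (form_twist pf v)^T) 0 0.
Definition singular pf u : Prop :=
  match pf with QuadForm A => quad A u = 0 | _ => True end.

Lemma form_twistD pf v w : form_twist pf (v + w) = form_twist pf v + form_twist pf w.
Proof. by case: pf => //= M s; rewrite map_mxD. Qed.

Lemma form_twistZ pf c v : form_twist pf (c *: v) = form_aut pf c *: form_twist pf v.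
Proof. by case: pf => //= M s; rewrite map_mxZ. Qed.

Lemma sformDl pf u v w : sform pf (u + v) w = sform pf u w + sform pf v w.
Proof. by rewrite /sform !mulmxDl mxE. Qed.

Lemma sformDr pf u v w : sform pf u (v + w) = sform pf u v + sform pf u w.
Proof. by rewrite /sform form_twistD linearD /= mulmxDr mxE. Qed.

Lemma sformZr pf u c v : sform pf u (c *: v) = form_aut pf c * sform pf u v.
Proof. by rewrite /sform form_twistZ linearZ /= -scalemxAr mxE. Qed.

Lemma sform0r pf u : sform pf u 0 = 0.
Proof. by case: pf => *; rewrite /sform /= ?map_mx0 trmx0 mulmx0 mxE. Qed.

Lemma trmx11 (B : 'M[F]_1) : B^T 0 0 = B 0 0.
Proof. by rewrite mxE. Qed.

Lemma quad_polarE A u v : quad_polar A u v = sform (QuadForm A) u v.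
Proof.
have mx00D (B C : 'M[F]_1) : (B + C) 0 0 = B 0 0 + C 0 0 by rewrite mxE.
have -> : sform (QuadForm A) u v = bil A u v + bil A v u.
  by rewrite /sform /bil /= mulmxDr mulmxDl mx00D -[X in _ = _ + X]trmx11
    !trmx_mul trmxK mulmxA.
rewrite /quad_polar /quad /bil linearD /= !mulmxDl !mulmxDr !mx00D; ring.
Qed.

Lemma totally_isotropicP pf W : totally_isotropic pf W <->
  (forall u, u \in W -> singular pf u) /\
  (forall u v, u \in W -> v \in W -> sform pf u v = 0).
Proof.
case: pf => [M|M s|A] /=; try by split=> [|[]].
split=> [Wsing|[]//]; split=> // u v uW vW.
by rewrite -quad_polarE /quad_polar !Wsing ?memvD // !subr0.
Qed.

Lemma singularD pf u v :
  singular pf u -> singular pf v -> sform pf u v = 0 -> singular pf (u + v).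
Proof. by case: pf => //= A qu qv; rewrite -quad_polarE /quad_polar qu qv !subr0. Qed.

Lemma sform_eq0_sym pf u v :
  pf_nondegenerate pf -> sform pf u v = 0 -> sform pf v u = 0.
Proof.
case: pf => [M [_ alt]|M s [_ sK _ sM]|A _] uv0.
- have altF w : sform (AltForm M) w w = 0 := alt w.
  have := altF (u + v).
  by rewrite sformDl !sformDr !altF uv0 !(add0r, addr0).
- suff -> : sform (HermForm M s) v u = s (sform (HermForm M s) u v).
    by rewrite uv0 rmorph0.
  have ssv : map_mx s (map_mx s v) = v by apply/matrixP => i j; rewrite !mxE sK.
  rewrite /sform /= -[LHS]trmx11 !trmx_mul trmxK mulmxA.
  have -> : s ((u *m M *m (map_mx s v)^T) 0 0) =
            (map_mx s (u *m M *m (map_mx s v)^T)) 0 0 by rewrite [in RHS]mxE.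
  have sM' : map_mx s M = M^T by rewrite -[in RHS]sM trmxK.
  by rewrite !map_mxM -map_trmx ssv sM'.
- by move: uv0; rewrite -!quad_polarE /quad_polar [v + u]addrC => <-; ring.
Qed.
End Forms.

Section Orthogonality.
Variables (F : finFieldType) (n : nat) (pf : polar_form F n).
Implicit Types (v t : 'rV[F]_n) (A B T W w z : {vspace 'rV[F]_n}).

Definition orthv_mx T : 'M[F]_(n, \dim T) :=
  form_mx pf *m (\matrix_i form_twist pf (tnth (vbasis T) i))^T.

Definition orthv T : {vspace 'rV[F]_n} := lker (linfun (mulmxr (orthv_mx T))).

Lemma mul_orthv_mx T v : v *m orthv_mx T = \row_i sform pf v (tnth (vbasis T) i).
Proof.
by apply/rowP => i; rewrite /sform mulmxA !mxE; apply: eq_bigr => k _; rewrite !mxE.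
Qed.

Lemma orthvP T v : reflect (forall t, t \in T -> sform pf v t = 0) (v \in orthv T).
Proof.
rewrite memv_ker lfunE /= mul_orthv_mx.
apply: (iffP eqP) => [/rowP vT0 t /coord_vbasis -> | vT0].
  apply: (big_ind (fun x => sform pf v x = 0)) => [|a b va0 vb0|i _].
  - exact: sform0r.
  - by rewrite sformDr va0 vb0 addr0.
  - by have := vT0 i; rewrite !mxE (tnth_nth 0) sformZr => ->; rewrite mulr0.
by apply/rowP => i; rewrite !mxE vT0 // vbasis_mem // mem_tnth.
Qed.

Lemma dim_cap_orthv A T : (\dim A <= \dim (A :&: orthv T) + \dim T)%N.
Proof.
rewrite -(limg_ker_dim (linfun (mulmxr (orthv_mx T))) A) leq_add2l.
by apply: leq_trans (dimvS (subvf _)) _; rewrite dimvf /dim /= mul1n.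
Qed.

Hypothesis pf_nd : pf_nondegenerate pf.

Local Notation ti := (totally_isotropic pf).

Lemma ti_subv V W : ti W -> (V <= W)%VS -> ti V.
Proof.
move=> /totally_isotropicP[Wsing Worth] /subvP VW.
apply/totally_isotropicP.
by split=> [u /VW|u v /VW uW /VW vW]; [apply: Wsing|apply: Worth].
Qed.

Lemma ti_sub_orthv T W : ti W -> (T <= W)%VS -> (W <= orthv T)%VS.
Proof.
move=> /totally_isotropicP[_ Worth] /subvP TW; apply/subvP => u uW.
by apply/orthvP => t /TW; apply: Worth.
Qed.

Lemma ti_addv A B : ti A -> ti B ->
  (forall a b, a \in A -> b \in B -> sform pf a b = 0) -> ti (A + B).
Proof.
move=> /totally_isotropicP[Asing Aorth] /totally_isotropicP[Bsing Borth] AB.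
apply/totally_isotropicP; split=> [_ /memv_addP[a aA [b bB ->]]|].
  exact: singularD (Asing a aA) (Bsing b bB) (AB a b aA bB).
move=> _ _ /memv_addP[a aA [b bB ->]] /memv_addP[a' a'A [b' b'B ->]].
rewrite !sformDl !sformDr (Aorth a a') ?(AB a b') ?(Borth b b') //.
by rewrite (sform_eq0_sym pf_nd (AB _ _ a'A bB)) !addr0.
Qed.

(* Only [T :\: z] imposes conditions on [z], since [z] is orthogonal to [T :&: z]. *)
Lemma dim_cap_orthv_ti T z :
  ti z -> (\dim z + \dim (T :&: z) <= \dim (z :&: orthv T) + \dim T)%N.
Proof.
move=> zti; have := dim_cap_orthv z (T :\: z).
have -> : \dim T = (\dim (T :&: z) + \dim (T :\: z))%N by rewrite dimv_cap_compl.
suff /dimvS : (z :&: orthv (T :\: z) <= z :&: orthv T)%VS by lia.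
apply/subvP => u /[!memv_cap] /andP[uz /orthvP uD]; rewrite uz /=.
apply/orthvP => t; rewrite -(addv_diff_cap T z) => /memv_addP[t1 t1D [t2 t2Tz ->]].
rewrite sformDr uD // add0r.
move: zti t2Tz => /totally_isotropicP[_ zorth] /[!memv_cap] /andP[_].
exact: zorth.
Qed.

(* The vertices through a totally isotropic [T] form a convex subspace of the
   dual polar graph; [gate T z] is the gate of [z] in it, i.e. the vertex
   through [T] nearest to [z]. *)
Definition gate T z : {vspace 'rV[F]_n} := (T + z :&: orthv T)%VS.

Lemma ti_gate T z : ti T -> ti z -> ti (gate T z).
Proof.
move=> Tti zti; apply: ti_addv => // [|t q tT /[!memv_cap] /andP[_ /orthvP qT]].
  exact: ti_subv zti (capvSl _ _).
exact: sform_eq0_sym pf_nd (qT t tT).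
Qed.

Lemma dim_gate d T z : witt_index pf d -> ti T -> ti z -> \dim z = d ->
  \dim (gate T z) = d.
Proof.
move=> [_ maxd] Tti zti dz; apply/eqP; rewrite eqn_leq maxd /=; last exact: ti_gate.
have := dim_cap_orthv_ti T zti; have := dimv_sum_cap T (z :&: orthv T).
have /dimvS : (T :&: (z :&: orthv T) <= T :&: z)%VS by rewrite capvS ?capvSl.
rewrite /gate; lia.
Qed.

Lemma sub_gate u0 T w z : ti w -> (T <= w)%VS -> (u0 :&: w <= T)%VS ->
  between u0 w z -> (w <= gate T z)%VS.
Proof.
move=> wti Tw wT /andP[_ /subv_trans]; apply; apply: addvS => //.
by rewrite capvC capvS // ti_sub_orthv.
Qed.

Lemma between_gate u0 T z : (T <= u0)%VS -> (u0 :&: z <= T)%VS ->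
  between u0 (gate T z) z.
Proof.
move=> Tu0 zT; apply/andP; split; first exact: subv_trans zT (addvSl _ _).
by apply: addvS; rewrite subv_cap ?Tu0 ?addvSl ?addvSr ?capvSl.
Qed.

Lemma between_gate_r u0 T w z : ti w -> (T <= w)%VS -> (T <= u0)%VS ->
  between u0 w z -> between u0 w (gate T z).
Proof.
move=> wti Tw Tu0 /andP[zw wuz]; apply/andP; split.
  apply/subvP => v /[!memv_cap] /andP[vu0 /memv_addP[t tT [q qzT vE]]]; subst v.
  have qu0 : q \in u0 by rewrite -(addKr t q) rpredD ?rpredN // (subvP Tu0).
  apply: rpredD; first exact: (subvP Tw).
  by apply: (subvP zw); move: qzT; rewrite !memv_cap qu0 => /andP[].
apply: (subv_trans wuz); apply: addvS => //; rewrite subv_cap capvSl /=.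
by apply: subv_trans (addvSr _ _); rewrite capvC capvS // ti_sub_orthv.
Qed.

Lemma capv_sub_gate u0 x y z : ti x -> between u0 x z -> between u0 y z ->
  (x :&: y <= gate (x :&: y :&: u0) z)%VS.
Proof.
move=> xti /andP[_ xuz] /andP[zy yuz].
apply/subvP => v /[!memv_cap] /andP[vx vy].
have [p /[!memv_cap] /andP[pu0 px] [q /[!memv_cap] /andP[qx qz] vpq]] :=
  memv_addP (subvP xuz v vx).
have [p' /[!memv_cap] /andP[p'u0 p'y] [q' /[!memv_cap] /andP[q'y q'z] vpq']] :=
  memv_addP (subvP yuz v vy).
(* [p - p' = q' - q] lies in [u0 :&: z], hence in [y]. *)
have pp'_y : p - p' \in y.
  apply: (subvP zy); rewrite memv_cap memvB //=.
  rewrite (_ : p - p' = q' - q) ?memvB //.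
  by rewrite -[p](addrK q) -vpq vpq' addrC !addrA addNr add0r.
have pT : p \in (x :&: y :&: u0)%VS by rewrite !memv_cap px pu0 -(subrK p' p) rpredD.
rewrite vpq; apply: rpredD; first exact: (subvP (addvSl _ _)).
apply: (subvP (addvSr _ _)); rewrite memv_cap qz.
by apply: (subvP (ti_sub_orthv xti _)) => //; rewrite -capvA capvSl.
Qed.

End Orthogonality.

Theorem lemmaA4 (F : finFieldType) (n d : nat) (pf : polar_form F n)
    (u0 x y : {vspace 'rV[F]_n}) :
  pf_nondegenerate pf -> witt_index pf d ->
  dp_vertex pf d u0 -> dp_vertex pf d x -> dp_vertex pf d y ->
  forall z, dp_vertex pf d z ->
    fz d u0 x z = 1%N -> fz d u0 y z = 1%N ->
    exists! z', [/\ dp_vertex pf d z', (x :&: y <= z')%VS,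
                    fz d u0 x z' = 1%N, fz d u0 y z' = 1%N &
                    fz d u0 z' z = 1%N].
Proof.
move=> nd witt [_ du0] [xti dx] [yti dy] z [zti dz].
move=> /(fz_between _ du0 dx) xz /(fz_between _ du0 dy) yz.
set T := (x :&: y :&: u0)%VS.
have Txy : (T <= x :&: y)%VS := capvSl _ _.
have Tx : (T <= x)%VS := subv_trans Txy (capvSl _ _).
have Ty : (T <= y)%VS := subv_trans Txy (capvSr _ _).
have Tu0 : (T <= u0)%VS := capvSr _ _.
have Tti : totally_isotropic pf T := ti_subv xti Tx.
have dgate := dim_gate nd witt Tti zti dz.
exists (gate pf T z); split.
  split; first split; [exact: ti_gate | exact: dgate | exact: capv_sub_gate | | |].
  - exact/(fz_between _ du0 dx)/between_gate_r.
  - exact/(fz_between _ du0 dy)/between_gate_r.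
  apply/(fz_between _ du0 dgate)/between_gate => //.
  by move: xz yz => /andP[zx _] /andP[zy _]; rewrite !subv_cap zx zy capvSl.
move=> w [[wti dw] xyw /(fz_between _ du0 dx) xw /(fz_between _ du0 dy) yw].
move=> /(fz_between _ du0 dw) wz.
have wT : (u0 :&: w <= T)%VS.
  by move: xw yw => /andP[wx _] /andP[wy _]; rewrite !subv_cap wx wy capvSl.
have Tw : (T <= w)%VS := subv_trans Txy xyw.
by apply/eqP; rewrite eq_sym eqEdim (sub_gate wti Tw wT wz) dw dgate /=.
Qed.
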